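(* Let $X$ be a time-homogeneous Markov chain on $\mathbf{R}$ with arbitrary initial distribution and renewal measure $U(B)=\sum_{n\ge0}\mathbf{P}\{X_n\in B\}$, whose jumps are nonnegative, $\xi(x)\ge0$ a.s. for all $x$. Suppose there is $A>0$ with $\gamma:=\inf_{x\in\mathbf{R}}\mathbf{P}\{\xi(x)>A\}>0$. Then $U(x,x+h]\le (A+h)/(\gamma^2A)$ for all $x\in\mathbf{R}$ and $h>0$.
   Context: $\xi(x)$ denotes a random variable with $\mathbf{P}\{x+\xi(x)\in B\}=P(x,B)$, $P$ being the transition kernel of the chain. *)

From HB Require Import structures.
From mathcomp Require Import all_boot all_order all_algebra.
From mathcomp Require Import all_classical all_reals all_analysis.
Set Implicit Arguments. Unset Strict Implicit. Unset Printing Implicit Defensive.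
Import Order.TTheory GRing.Theory Num.Theory.
Local Open Scope classical_set_scope.
Local Open Scope ring_scope.
Local Open Scope ereal_scope.

Definition markov_chain (d : measure_display) (Omega : measurableType d)
  (R : realType) (P : probability Omega R) (X : nat -> Omega -> R)
  (k : R.-pker R ~> R) : Prop :=
  (forall n, measurable_fun setT (X n)) /\
  forall (n : nat) (B : nat -> set R) (C : set R),
    (forall i, measurable (B i)) -> measurable C ->
    P (\bigcap_(i in `I_n.+1) (X i @^-1` B i) `&` (X n.+1 @^-1` C)) =
    \int[P]_(w in \bigcap_(i in `I_n.+1) (X i @^-1` B i)) k (X n w) C.

Definition renewal_measure (d : measure_display) (Omega : measurableType d)
  (R : realType) (P : probability Omega R) (X : nat -> Omega -> R)
  (B : set R) : \bar R :=
  \sum_(0 <= n <oo) P (X n @^-1` B).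

(* gamma = inf_x P{ xi(x) > A } = inf_x k x (x + A, +oo) *)
Definition jump_gamma (R : realType) (k : R.-pker R ~> R) (A : R) : \bar R :=
  ereal_inf (range (fun x : R => k x `]((x + A)%R), +oo[%classic)).

From HB Require Import structures.
From mathcomp Require Import all_boot all_order all_algebra.
From mathcomp Require Import all_classical all_reals all_analysis.
Set Implicit Arguments.
Unset Strict Implicit.
Unset Printing Implicit Defensive.
Import Order.TTheory GRing.Theory Num.Theory.
Local Open Scope classical_set_scope.
Local Open Scope ring_scope.

(* Write t = x + A and I = (x, t].  Since jumps are nonnegative, a chain
   above t stays above t, and from any point of I it jumps above t with
   probability at least gamma; hence
     gamma P{X_n in I} + P{X_n > t} <= P{X_{n+1} > t}.
   Telescoping gives gamma U(I) <= 1.  Covering (x, x + h] by at most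
   (A + h) / A translates of I and using gamma <= 1 gives the bound. *)

Lemma mule_sum_le_telescope (R : realType) (a b : nat -> \bar R) (g : R) :
  0 <= g -> (forall n, (0 <= b n)%E) ->
  (forall n, (g%:E * b n + a n <= a n.+1)%E) ->
  forall N, (g%:E * (\sum_(0 <= n < N) b n)%E + a 0%N <= a N)%E.
Proof.
move=> g0 b0 step; elim=> [|N IH]; first by rewrite big_geq // mule0 add0e.
rewrite big_nat_recr //= ge0_muleDr ?sume_ge0 //.
rewrite (addeC _ (_ * b N)%E) -addeA.
by apply: le_trans (step N); rewrite leeD2l.
Qed.

Section renewal_measure.
Context (d : measure_display) (Omega : measurableType d) (R : realType).
Variables (P : probability Omega R) (X : nat -> Omega -> R).
Hypothesis mX : forall n, measurable_fun setT (X n).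
Local Open Scope ereal_scope.

Lemma measurable_preimage_chain n (B : set R) :
  measurable B -> measurable (X n @^-1` B).
Proof. by move=> mB; rewrite -[_ @^-1` _]setTI; apply: mX. Qed.

Lemma le_renewal_measure (B C : set R) :
  measurable B -> measurable C -> B `<=` C ->
  renewal_measure P X B <= renewal_measure P X C.
Proof.
move=> mB mC BC; apply: lee_nneseries => [n _ _|n _]; first exact: measure_ge0.
apply: le_measure; rewrite ?inE; try exact: measurable_preimage_chain.
by move=> w /= /BC.
Qed.

Lemma renewal_measureU_le (B C : set R) :
  measurable B -> measurable C ->
  renewal_measure P X (B `|` C) <=
  renewal_measure P X B + renewal_measure P X C.
Proof.
move=> mB mC; rewrite /renewal_measure -nneseriesD => [|n _ _|n _ _];
  try exact: measure_ge0.
apply: lee_nneseries => [n _ _|n _]; first exact: measure_ge0.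
by rewrite preimage_setU; apply: measureU2; exact: measurable_preimage_chain.
Qed.

End renewal_measure.

Section nonnegative_jumps.
Context (d : measure_display) (Omega : measurableType d) (R : realType).
Variables (P : probability Omega R) (X : nat -> Omega -> R).
Variables (k : R.-pker R ~> R) (A g : R).
Local Open Scope ereal_scope.
Hypothesis chainX : markov_chain P X k.
Hypothesis jumps_ge0 : forall y : R, k y `]-oo, y[%classic = 0.
Hypothesis g_ge0 : (0 <= g)%R.
Hypothesis g_le_jump : forall y : R, g%:E <= k y `](y + A)%R, +oo[%classic.

Let mX := chainX.1.
Let mitv n (i : interval R) := measurable_preimage_chain mX n (measurable_itv i).

Lemma markov_chain_transition n (S C : set R) :
  measurable S -> measurable C ->
  P (X n @^-1` S `&` X n.+1 @^-1` C) = \int[P]_(w in X n @^-1` S) k (X n w) C.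
Proof.
move=> mS mC; have := chainX.2 n (fun i => if i == n then S else setT) C.
have -> : \bigcap_(i in `I_n.+1) X i @^-1` (if i == n then S else setT) =
          X n @^-1` S.
  apply/seteqP; split => w /=; first by move=> /(_ n (ltnSn n)); rewrite eqxx.
  by move=> Sw i _; case: ifP => // /eqP ->.
by apply => // i; case: ifP.
Qed.

Lemma prob_stay_above n (t : R) :
  P (X n @^-1` `]t, +oo[) =
  P (X n @^-1` `]t, +oo[ `&` X n.+1 @^-1` `]t, +oo[).
Proof.
set E := X n @^-1` _; set F := X n.+1 @^-1` _.
have fall0 : P (E `&` X n.+1 @^-1` `]-oo, t]) = 0.
  rewrite markov_chain_transition; try exact: measurable_itv.
  apply: integral0_eq => w; rewrite /E /= in_itv /= andbT => tw.
  apply/eqP; rewrite eq_le measure_ge0 andbT -(jumps_ge0 (X n w)).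
  apply: le_measure; rewrite ?inE; try exact: measurable_itv.
  by move=> y /=; rewrite !in_itv /= => yt; apply: le_lt_trans yt tw.
have disj : (E `&` F) `&` (E `&` X n.+1 @^-1` `]-oo, t]) = set0.
  apply/seteqP; split => w //= [[_]]; rewrite /F /= !in_itv /= andbT => tX [_].
  by rewrite leNgt tX.
rewrite -[RHS]adde0 -fall0 -measureU ?disj //; try by apply: measurableI; exact: mitv.
congr (P _); apply/seteqP; split => w /=; last by case=> -[].
by move=> Ew; case: (ltP t (X n.+1 w)) => tX; [left|right];
  rewrite /F /= in_itv /= ?andbT.
Qed.

Lemma prob_jump_above n (x : R) :
  g%:E * P (X n @^-1` `]x, (x + A)%R]) <=
  P (X n @^-1` `]x, (x + A)%R] `&` X n.+1 @^-1` `](x + A)%R, +oo[).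
Proof.
have mI := mitv n `]x, (x + A)%R].
rewrite markov_chain_transition -?integral_cst //; try exact: measurable_itv.
apply: ge0_le_integral => //.
  move=> _ Y mY; have := measurable_kernel k _ (measurable_itv `](x + A)%R, +oo[).
  by move=> /(_ measurableT Y mY); rewrite setTI; exact: measurable_funTS (mX n) mI _.
move=> w; rewrite /= in_itv /= => /andP[xw _].
apply: (le_trans (g_le_jump (X n w))).
apply: le_measure; rewrite ?inE; try exact: measurable_itv.
by move=> y /=; rewrite !in_itv /= !andbT; apply: le_lt_trans; rewrite lerD2r ltW.
Qed.

Lemma prob_above_increment n (x : R) :
  g%:E * P (X n @^-1` `]x, (x + A)%R]) + P (X n @^-1` `](x + A)%R, +oo[) <=
  P (X n.+1 @^-1` `](x + A)%R, +oo[).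
Proof.
set t := (x + A)%R; set E := X n @^-1` `]x, t]; set F := X n.+1 @^-1` `]t, +oo[.
have mEF : measurable (E `&` F) by apply: measurableI; exact: mitv.
have mAF : measurable (X n @^-1` `]t, +oo[ `&` F) by apply: measurableI; exact: mitv.
have disj : (E `&` F) `&` (X n @^-1` `]t, +oo[ `&` F) = set0.
  apply/seteqP; split => w //= [[+ _] [+ _]]; rewrite !in_itv /= andbT.
  by move=> /andP[_ Xt] tX; have := lt_le_trans tX Xt; rewrite ltxx.
rewrite prob_stay_above; apply: le_trans (leeD2r _ (prob_jump_above n x)) _.
rewrite -measureU ?disj //; apply: le_measure; rewrite ?inE; try by move=> w [] [].
- exact: measurableU.
- exact: mitv.
Qed.

Lemma renewal_measure_itv_le (x : R) :
  (0 < g)%R -> renewal_measure P X `]x, (x + A)%R] <= (g^-1)%:E.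
Proof.
move=> g_gt0; apply: lime_le; first exact: is_cvg_nneseries.
apply: nearW => N; rewrite -(mul1e (_^-1)%:E) muleC lee_pdivlMl //.
have := mule_sum_le_telescope g_ge0 (fun n => measure_ge0 _ _)
  (prob_above_increment ^~ x) N.
move=> /le_trans/(_ (probability_le1 _ (mitv N _))); apply: le_trans.
by rewrite leeDl.
Qed.

Lemma renewal_measure_itv_mul_le (J : nat) (x : R) :
  (0 < g)%R ->
  renewal_measure P X `]x, (x + J.+1%:R * A)%R] <= (J.+1%:R / g)%:E.
Proof.
move=> g_gt0; elim: J => [|J IH]; first by rewrite mul1r div1r renewal_measure_itv_le.
set y := (x + J.+1%:R * A)%R.
have -> : (x + J.+2%:R * A)%R = (y + A)%R by rewrite /y mulrSr mulrDl mul1r addrA.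
have -> : (J.+2%:R / g = J.+1%:R / g + g^-1)%R by rewrite mulrSr mulrDl div1r.
apply: (@le_trans _ _ (renewal_measure P X (`]x, y] `|` `]y, (y + A)%R]))).
  apply: le_renewal_measure => //; try exact: measurable_itv.
    by apply: measurableU; exact: measurable_itv.
  move=> z /=; rewrite !in_itv /= => /andP[xz zyA].
  by case: (leP z y) => zy; [left|right]; rewrite ?xz ?zy ?zyA.
apply: le_trans (renewal_measureU_le P mX (measurable_itv _) (measurable_itv _)) _.
by rewrite EFinD leeD ?renewal_measure_itv_le.
Qed.

Lemma renewal_measure_itv_le_ratio (x h : R) : (0 < A)%R -> (0 < h)%R ->
  (0 < g)%R -> renewal_measure P X `]x, (x + h)%R] <= ((A + h) / (A * g))%:E.
Proof.
move=> A_gt0 h_gt0 g_gt0; set J := Num.truncn (h / A).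
have /andP[J_le_hA hA_lt_J1] := truncn_itv (ltW (divr_gt0 h_gt0 A_gt0)).
apply: (@le_trans _ _ (renewal_measure P X `]x, (x + J.+1%:R * A)%R])).
  apply: (le_renewal_measure P mX); try exact: measurable_itv.
  move=> z /=; rewrite !in_itv /= => /andP[-> zh] /=.
  by apply: (le_trans zh); rewrite lerD2l -ler_pdivrMr //; exact: ltW.
apply: le_trans (renewal_measure_itv_mul_le J x g_gt0) _.
rewrite lee_fin invfM mulrA ler_pM2r ?invr_gt0 //.
by rewrite mulrDl divff ?gt_eqF // -natr1 addrC lerD2l.
Qed.

End nonnegative_jumps.

Lemma jump_gamma_le (R : realType) (k : R.-pker R ~> R) (A y : R) :
  (jump_gamma k A <= k y `](y + A)%R, +oo[%classic)%E.
Proof. by apply: ereal_inf_lbound; exists y. Qed.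

Lemma jump_gamma_le1 (R : realType) (k : R.-pker R ~> R) (A : R) :
  (jump_gamma k A <= 1)%E.
Proof.
apply: le_trans (jump_gamma_le k A 0) _; rewrite -(prob_kernel (s := k) 0).
by apply: le_measure; rewrite ?inE //; exact: measurable_itv.
Qed.

Theorem mainTheorem5 (d : measure_display) (Omega : measurableType d)
  (R : realType) (P : probability Omega R) (X : nat -> Omega -> R)
  (k : R.-pker R ~> R) (A : R) :
  markov_chain P X k ->
  (* nonnegative jumps: xi(x) >= 0 a.s., i.e. k x (-oo, x) = 0 *)
  (forall x : R, k x `]-oo, x[%classic = 0%E) ->
  0 < A ->
  (0 < jump_gamma k A)%E ->
  forall (x h : R), 0 < h ->
    (renewal_measure P X `]x, (x + h)%R]%classic <=
     ((A + h) / ((fine (jump_gamma k A)) ^+ 2 * A))%:E)%E.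
Proof.
move=> chainX jumps_ge0 A_gt0 G_gt0 x h h_gt0.
have G_le1 := jump_gamma_le1 k A.
have Gfin : jump_gamma k A = (fine (jump_gamma k A))%:E.
  by rewrite fineK // ge0_fin_numE ?(ltW G_gt0) // (le_lt_trans G_le1) ?ltey.
set g := fine (jump_gamma k A) in Gfin *.
have g_gt0 : 0 < g by rewrite -lte_fin -Gfin.
have g_le1 : g <= 1 by rewrite -lee_fin -Gfin.
have g_le_jump y : (g%:E <= k y `](y + A)%R, +oo[%classic)%E.
  by rewrite -Gfin jump_gamma_le.
apply: le_trans (renewal_measure_itv_le_ratio chainX jumps_ge0 (ltW g_gt0)
  g_le_jump x A_gt0 h_gt0 g_gt0) _.
rewrite lee_fin ler_pM2l ?addr_gt0 // lef_pV2 ?posrE ?mulr_gt0 ?exprn_gt0 //.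
by rewrite mulrC expr2 mulrA ler_piMr // mulr_ge0 // ltW.
Qed.
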